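(* Let $A=2^\omega$ be the set of all subsets of $\omega$. For each $n\in\omega$ let $e_n\subseteq A$ be the set of subsets of $\omega$ containing $n$, and let $W$ be the closure of $\{e_n\mid n\in\omega\}\cup\{\emptyset,A\}$ under pairwise unions and intersections. Then $(A,W)$ is a Pratt comonoid.
   Context: A Pratt comonoid is a pair $(A,W)$ where $A$ is a set and $W$ is a set of subsets of $A$ such that (i) $\emptyset\in W$ and $A\in W$; (ii) whenever $C\subseteq A\times A$ is such that for every $a\in A$ both the $a$-th row $\{b\mid (a,b)\in C\}$ and the $a$-th column $\{b\mid (b,a)\in C\}$ belong to $W$ (a crossword over $W$), the diagonal $\{b\mid (b,b)\in C\}$ also belongs to $W$. *)

From mathcomp Require Import all_boot.
From mathcomp Require Import boolp classical_sets.
Set Implicit Arguments. Unset Strict Implicit. Unset Printing Implicit Defensive.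
Local Open Scope classical_set_scope.

(* A Pratt comonoid (A, W): here the carrier set A is the whole type T,
   and W is a set of subsets of T. *)
Definition pratt_comonoid (T : Type) (W : set (set T)) : Prop :=
  W set0 /\ W setT /\
  forall C : set (T * T),
    (forall a : T, W [set b | C (a, b)] /\ W [set b | C (b, a)]) ->
    W [set b | C (b, b)].

Definition e_n (n : nat) : set (set nat) := [set x | x n].

Inductive W_omega : set (set (set nat)) :=
| W_e : forall n, W_omega (e_n n)
| W_empty : W_omega set0
| W_full : W_omega setT
| W_union : forall X Y, W_omega X -> W_omega Y -> W_omega (X `|` Y)
| W_inter : forall X Y, W_omega X -> W_omega Y -> W_omega (X `&` Y).

From mathcomp Require Import all_boot.
From mathcomp Require Import boolp classical_sets.

(** The members of [W_omega] are exactly the upward closed sets of subsets of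
    omega that depend on finitely many coordinates.  If every row and column
    of a crossword has this form, the diagonal is again upward closed, since
    [C (x, x) -> C (x, y) -> C (y, y)] for [x `<=` y].  Sandwiching a set [y]
    between the truncation [b `&` [0, m)] and the cotruncation
    [b `|` [m, oo)] of a nearby set [b] then shows that membership of [y] in
    the diagonal only depends on finitely many coordinates of [y] near each
    [b], i.e. the diagonal is clopen in Cantor space; by compactness (König's
    lemma on the tree of cylinders where no finite support exists) it depends
    on finitely many coordinates globally. *)

Set Implicit Arguments. Unset Strict Implicit. Unset Printing Implicit Defensive.
Local Open Scope classical_set_scope.

Definition agree (n : nat) (y z : set nat) := forall i, (i < n)%N -> (y i <-> z i).

Definition determined_by (n : nat) (X : set (set nat)) :=
  forall y z, agree n y z -> (X y <-> X z).

Definition finitely_determined (X : set (set nat)) := exists n, determined_by n X.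

Definition locally_determined (X : set (set nat)) :=
  forall b, exists n, forall y, agree n y b -> (X y <-> X b).

Definition upward_closed (X : set (set nat)) := forall x y, x `<=` y -> X x -> X y.

Definition trunc (b : set nat) (m : nat) : set nat := [set i | (i < m)%N /\ b i].

Definition cotrunc (b : set nat) (m : nat) : set nat := [set i | (i < m)%N -> b i].

Lemma agree0 y z : agree 0 y z.
Proof. by []. Qed.

Lemma agree_trans n x y z : agree n x y -> agree n y z -> agree n x z.
Proof. by move=> xy yz i lt_in; apply: iff_trans (xy i lt_in) (yz i lt_in). Qed.

Lemma agree_le m n y z : (m <= n)%N -> agree n y z -> agree m y z.
Proof. by move=> le_mn yz i lt_im; apply: yz; apply: leq_trans lt_im le_mn. Qed.

Lemma agreeS n y z : agree n y z -> (y n <-> z n) -> agree n.+1 y z.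
Proof. by move=> yz yzn i; rewrite ltnS leq_eqVlt => /orP[/eqP->|/yz]. Qed.

Lemma agreeU n A y z : agree n y z -> agree n (y `|` A) (z `|` A).
Proof. by move=> yz i /yz yzi; rewrite /setU /=; tauto. Qed.

Lemma agreeD n A y z : agree n y z -> agree n (y `\` A) (z `\` A).
Proof. by move=> yz i /yz yzi; rewrite /setD /=; tauto. Qed.

Lemma agree_setU1 n x : agree n (x `|` [set n]) x.
Proof. by move=> i /ltn_eqF/negbT/eqP ne_in; split=> [[//|/ne_in []]|xi]; left. Qed.

Lemma agree_setD1 n x : agree n (x `\ n) x.
Proof. by move=> i /ltn_eqF/negbT/eqP ne_in; split=> [[]|xi]. Qed.

Lemma agreeS_setU1 n w x : agree n w x -> w n -> agree n.+1 w (x `|` [set n]).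
Proof.
move=> wx wn; apply: agreeS; last by split=> _; [right|].
by move=> i /[dup] /wx wxi /(agree_setU1 x); tauto.
Qed.

Lemma agreeS_setD1 n w x : agree n w x -> ~ w n -> agree n.+1 w (x `\ n).
Proof.
move=> wx wn; apply: agreeS; last by split=> [/wn|[_ /(_ erefl)]].
by move=> i /[dup] /wx wxi /(agree_setD1 x); tauto.
Qed.

Lemma agree_trunc b m : agree m (trunc b m) b.
Proof. by move=> i lt_im; split=> [[]|]. Qed.

Lemma agree_cotrunc b m : agree m (cotrunc b m) b.
Proof. by move=> i lt_im; split=> [/(_ lt_im)|bi _]. Qed.

Lemma subset_trunc b m n : (m <= n)%N -> trunc b m `<=` trunc b n.
Proof. by move=> le_mn i [lt_im bi]; split=> //; apply: leq_trans lt_im le_mn. Qed.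

Lemma subset_cotrunc b m n : (m <= n)%N -> cotrunc b n `<=` cotrunc b m.
Proof. by move=> le_mn i bi lt_im; apply: bi; apply: leq_trans lt_im le_mn. Qed.

Lemma trunc_sub_agree b m y : agree m y b -> trunc b m `<=` y.
Proof. by move=> yb i [lt_im bi]; apply/(yb i lt_im). Qed.

Lemma agree_sub_cotrunc b m y : agree m y b -> y `<=` cotrunc b m.
Proof. by move=> yb i yi lt_im; apply/(yb i lt_im). Qed.

Lemma upward_locally_determined D : upward_closed D ->
  (forall b, exists m, D b -> D (trunc b m)) ->
  (forall b, exists m, D (cotrunc b m) -> D b) -> locally_determined D.
Proof.
move=> upD Dtrunc Dcotrunc b.
have [m1 Dm1] := Dtrunc b; have [m2 Dm2] := Dcotrunc b.
exists (maxn m1 m2) => y yb; split=> [Dy|Db].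
- apply: Dm2; apply: upD Dy; apply: subset_trans (agree_sub_cotrunc yb) _.
  exact: subset_cotrunc (leq_maxr m1 m2).
- apply: upD (Dm1 Db); apply: subset_trans _ (trunc_sub_agree yb).
  exact: subset_trunc (leq_maxl m1 m2).
Qed.

Lemma W_omega_upward_closed X : W_omega X -> upward_closed X.
Proof.
elim=> [n| | | A B _ upA _ upB | A B _ upA _ upB] x y xy //; first exact: xy.
- by case=> [/(upA _ _ xy)|/(upB _ _ xy)]; [left|right].
- by case=> /(upA _ _ xy) Ay /(upB _ _ xy).
Qed.

Lemma W_omega_finitely_determined X : W_omega X -> finitely_determined X.
Proof.
elim=> [n| | | A B _ [N dA] _ [M dB] | A B _ [N dA] _ [M dB]].
- by exists n.+1 => y z; apply; apply: ltnSn.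
- by exists 0.
- by exists 0.
- exists (maxn N M) => y z yz.
  have := dA y z (agree_le (leq_maxl N M) yz).
  have := dB y z (agree_le (leq_maxr N M) yz).
  rewrite /setU /=; tauto.
- exists (maxn N M) => y z yz.
  have := dA y z (agree_le (leq_maxl N M) yz).
  have := dB y z (agree_le (leq_maxr N M) yz).
  rewrite /setI /=; tauto.
Qed.

(* Shannon expansion along coordinate [n]: X = (e_n n `&` X1) `|` X0. *)
Lemma upward_determined_W_omega n X :
  upward_closed X -> determined_by n X -> W_omega X.
Proof.
elim: n X => [|n IH] X upX dX.
  case: (pselect (X set0)) => [X0|nX0].
    suff -> : X = setT by exact: W_full.
    by apply/predeqP => y; split=> // _; apply/(dX set0 y (agree0 _ _)).
  suff -> : X = set0 by exact: W_empty.
  by apply/predeqP => y; split=> // /(dX y set0 (agree0 _ _)).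
pose X1 : set (set nat) := [set y | X (y `|` [set n])].
pose X0 : set (set nat) := [set y | X (y `\ n)].
have -> : X = (e_n n `&` X1) `|` X0.
  apply/predeqP => y; split=> [Xy|].
    case: (pselect (y n)) => yn.
      by left; split=> //; apply: upX Xy => i; left.
    by right; apply: upX Xy => i yi; split=> // /= in_; apply: yn; rewrite -in_.
  case=> [[yn X1y]|X0y]; first by apply: upX X1y => i [|->].
  by apply: upX X0y => i [].
apply: W_union; [apply: W_inter; [exact: W_e|]|]; apply: IH.
- by move=> x y xy; apply: upX; apply: setSU.
- move=> y z yz; apply: dX; apply: agreeS; last by split=> _; right.
  exact: agreeU.
- by move=> x y xy; apply: upX; apply: setSD.
- move=> y z yz; apply: dX; apply: agreeS; last by split=> -[_ /(_ erefl)].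
  exact: agreeD.
Qed.

Lemma W_omegaP X : W_omega X <-> upward_closed X /\ finitely_determined X.
Proof.
split=> [WX|[upX [n dX]]]; last exact: upward_determined_W_omega upX dX.
by split; [apply: W_omega_upward_closed | apply: W_omega_finitely_determined].
Qed.

Section Compactness.

Variable D : set (set nat).
Hypothesis locD : locally_determined D.

Definition determined_near (x : set nat) (n : nat) := exists N, forall y z,
  agree n y x -> agree n z x -> agree N y z -> (D y <-> D z).

Lemma undetermined_branch x n : ~ determined_near x n ->
  determined_near (x `|` [set n]) n.+1 -> ~ determined_near (x `\ n) n.+1.
Proof.
move=> nx [N1 dN1] [N0 dN0]; apply: nx.
exists (maxn (maxn N1 N0) n.+1) => y z yx zx yz.
have yzn : y n <-> z n by apply: yz; rewrite leq_max ltnSn orbT.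
have yzN1 : agree N1 y z by apply: agree_le yz; rewrite !leq_max leqnn.
have yzN0 : agree N0 y z by apply: agree_le yz; rewrite !leq_max leqnn orbT.
case: (pselect (y n)) => yn.
- have zn : z n by apply/yzn.
  by apply: dN1 yzN1; apply: agreeS_setU1.
- have zn : ~ z n by move/yzn.
  by apply: dN0 yzN0; apply: agreeS_setD1.
Qed.

Definition branch (x : set nat) (n : nat) : set nat :=
  if pselect (determined_near (x `|` [set n]) n.+1) then x `\ n else x `|` [set n].

Fixpoint bad_path (k : nat) : set nat :=
  if k is k'.+1 then branch (bad_path k') k' else set0.

Lemma agree_branch x n : agree n (branch x n) x.
Proof. by rewrite /branch; case: pselect => ?; [apply: agree_setD1|apply: agree_setU1]. Qed.

Lemma agree_bad_path m d : agree m (bad_path (m + d)) (bad_path m).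
Proof.
elim: d => [|d IH]; first by rewrite addn0.
rewrite addnS /=; apply: agree_trans _ IH.
exact/(agree_le (leq_addr d m))/agree_branch.
Qed.

Lemma bad_path_undetermined : ~ determined_near set0 0 ->
  forall k, ~ determined_near (bad_path k) k.
Proof.
move=> nQ0; elim=> [|k IH] //=; rewrite /branch.
by case: pselect => [dx|//]; apply: undetermined_branch.
Qed.

Lemma locally_finitely_determined : finitely_determined D.
Proof.
case: (pselect (determined_near set0 0)) => [[N dN]|nQ0].
  by exists N => y z; apply: dN.
pose p : set nat := fun i => bad_path i.+1 i.
have path_p k : agree k (bad_path k) p.
  move=> i lt_ik; rewrite /p -(subnKC lt_ik).
  exact: agree_bad_path (ltnSn i).
have [m Dm] := locD p.
case: (bad_path_undetermined nQ0 (k := m)); exists 0 => y z yk zk _.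
have := Dm y (agree_trans yk (path_p m)).
have := Dm z (agree_trans zk (path_p m)); tauto.
Qed.

End Compactness.

Section Crossword.

Variable C : set (set nat * set nat).
Hypothesis rowW : forall a, W_omega [set b | C (a, b)].
Hypothesis colW : forall b, W_omega [set a | C (a, b)].

Lemma crossword_monotone x x' y y' :
  x `<=` x' -> y `<=` y' -> C (x, y) -> C (x', y').
Proof.
move=> xx' yy' Cxy.
have /W_omegaP[upcol _] := colW y'; have /W_omegaP[uprow _] := rowW x.
exact: upcol xx' (uprow _ _ yy' Cxy).
Qed.

Lemma diagonal_upward_closed : upward_closed [set b | C (b, b)].
Proof. by move=> x y xy; apply: crossword_monotone. Qed.

(* The row of [b] lets us replace its second argument by [f N1]; the column of
   that particular set then lets us replace the first one by [f N2]. *)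
Lemma diagonal_near b (f : nat -> set nat) : (forall m, agree m (f m) b) ->
  exists N1 N2, C (b, b) <-> C (f N2, f N1).
Proof.
move=> fb; have /W_omegaP[_ [N1 drow]] := rowW b.
have /W_omegaP[_ [N2 dcol]] := colW (f N1).
exists N1, N2.
have row_b : C (b, f N1) <-> C (b, b) := drow _ _ (fb N1).
have col_fN1 : C (f N2, f N1) <-> C (b, f N1) := dcol _ _ (fb N2).
by rewrite -row_b -col_fN1.
Qed.

Lemma diagonal_locally_determined : locally_determined [set b | C (b, b)].
Proof.
apply: upward_locally_determined diagonal_upward_closed _ _ => b.
- have [N1 [N2 eqC]] := diagonal_near (agree_trunc b).
  exists (maxn N1 N2) => /eqC /=.
  by apply: crossword_monotone; apply: subset_trunc; rewrite leq_max leqnn ?orbT.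
- have [N1 [N2 eqC]] := diagonal_near (agree_cotrunc b).
  exists (maxn N1 N2) => /= Cm; apply/eqC; move: Cm.
  by apply: crossword_monotone; apply: subset_cotrunc; rewrite leq_max leqnn ?orbT.
Qed.

Lemma diagonal_W_omega : W_omega [set b | C (b, b)].
Proof.
apply/W_omegaP; split; first exact: diagonal_upward_closed.
exact: locally_finitely_determined diagonal_locally_determined.
Qed.

End Crossword.

Theorem theorem5p3 : @pratt_comonoid (set nat) W_omega.
Proof.
split; first exact: W_empty.
split; first exact: W_full.
by move=> C CW; apply: diagonal_W_omega => a; have [] := CW a.
Qed.
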